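(* For every integer $m \geq 3$, $\gamma_{b,2}(P_m \square C_6) = m + c$, where $c \in \{0,1\}$ if $m \equiv 0 \pmod 4$ and $c = 1$ if $m \equiv 1, 2,$ or $3 \pmod 4$.
   Context: For a graph $G$, a $2$-limited broadcast is a function $f: V(G) \to \{0,1,2\}$. A vertex $u$ hears the broadcast from $v$ if $f(v) > 0$ and $d(u,v) \leq f(v)$, where $d$ is the distance in $G$. The broadcast $f$ is dominating if every vertex of $G$ hears the broadcast from some vertex. The cost of $f$ is $\sum_{v \in V(G)} f(v)$. The $2$-limited broadcast domination number $\gamma_{b,2}(G)$ is the minimum cost of a $2$-limited dominating broadcast on $G$. $C_6$ denotes the cycle on $6$ vertices, $P_m$ the path on $m$ vertices, and $\square$ the Cartesian product of graphs. *)

From mathcomp Require Import all_boot.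
Set Implicit Arguments. Unset Strict Implicit. Unset Printing Implicit Defensive.

Fixpoint within (V : finType) (e : rel V) (k : nat) (u v : V) : bool :=
  match k with
  | 0 => u == v
  | k'.+1 => within e k' u v || [exists w, e u w && within e k' w v]
  end.

Definition broadcast2 (V : finType) := {ffun V -> 'I_3}.

Definition hears (V : finType) (e : rel V) (f : broadcast2 V) (u v : V) : bool :=
  (0 < f v) && within e (f v) v u.

Definition dominating (V : finType) (e : rel V) (f : broadcast2 V) : bool :=
  [forall u, exists v, hears e f u v].

Definition cost (V : finType) (f : broadcast2 V) : nat := \sum_(v : V) (f v : nat).

(* gamma_{b,2}: minimum cost of a dominating 2-limited broadcast.  The default
   value #|V| of the iterated min is harmless: the broadcast f = 1 everywhere is
   dominating and has cost #|V|. *)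
Definition gamma_b2 (V : finType) (e : rel V) : nat :=
  \big[minn/#|V|]_(f : broadcast2 V | dominating e f) cost f.

Definition path_adj (n : nat) : rel 'I_n :=
  fun i j => (i.+1 == j :> nat) || (j.+1 == i :> nat).
Definition cycle_adj (n : nat) : rel 'I_n :=
  fun a b => (a.+1 %% n == b :> nat) || (b.+1 %% n == a :> nat).

Definition cartesian (V W : finType) (e1 : rel V) (e2 : rel W) : rel (V * W) :=
  fun x y => ((x.1 == y.1) && e2 x.2 y.2) || ((x.2 == y.2) && e1 x.1 y.1).

Definition PmC6 (m : nat) : rel ('I_m * 'I_6) := cartesian (@path_adj m) (@cycle_adj 6).
Arguments PmC6 m : clear implicits.

From mathcomp Require Import all_boot zify.
Set Implicit Arguments. Unset Strict Implicit. Unset Printing Implicit Defensive.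

(* Whether vertex (j, r) of P_m □ C_6 hears a 2-limited broadcast depends only
   on the values in columns j-2, ..., j+2.  Hence the dominating broadcasts are
   exactly the words accepted by a finite automaton that reads one column (an
   element of {0,1,2}^6) at a time and remembers which rows of the last two
   columns are still undominated and which rows of the next two are already
   dominated.  The lower bound cost > m is a potential argument on this
   automaton: a function p on its reachable states with p(s) < cost(c) + p(s')
   along every transition and p <= 2 on accepting states, found by a
   shortest-path search and checked by evaluation.  The upper bound puts a 2 in
   row 0 of every column j = 1 (mod 4) and in row 3 of every column j = 3
   (mod 4), a 1 in row 3 of column 0 and, for odd m, a 1 in the last column.
   So in fact gamma_{b,2}(P_m □ C_6) = m + 1 for all m >= 2, also when 4 | m. *)

(** * Distances in P_m □ C_6 *)

Section PathMetric.

Variables (V : finType) (e : rel V) (d : V -> V -> nat).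
Hypothesis d_eq0 : forall u v, (d u v == 0) = (u == v).
Hypothesis adj_dist : forall u v, e u v = (d u v == 1).
Hypothesis d_triangle : forall u w v, d u v <= d u w + d w v.
Hypothesis d_geodesic : forall u v, 0 < d u v -> exists2 w, e u w & d w v = (d u v).-1.

Lemma withinE k u v : within e k u v = (d u v <= k).
Proof.
elim: k u v => [|k IH] u v /=; first by rewrite leqn0 d_eq0.
apply/idP/idP.
- case/orP => [|/existsP [w /andP [euw]]]; rewrite IH; first exact: leqW.
  by rewrite adj_dist in euw; have := d_triangle u w v; rewrite (eqP euw); lia.
- move=> duv; rewrite IH; case: leqP => //= kduv.
  have [w euw dwv] := d_geodesic (leq_ltn_trans (leq0n k) kduv).
  by apply/existsP; exists w; rewrite euw IH dwv; lia.
Qed.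

End PathMetric.

Definition distn (a b : nat) := (a - b) + (b - a).
Definition cdist6 (a b : nat) := minn (distn a b) (6 - distn a b).

Lemma cdist6_eq0 (a b : 'I_6) : (cdist6 a b == 0) = (a == b).
Proof. by case: a b => [[|[|[|[|[|[|?]]]]]] ?] [[|[|[|[|[|[|?]]]]]] ?]. Qed.

Lemma cycle_adj6E (a b : 'I_6) : cycle_adj a b = (cdist6 a b == 1).
Proof. by case: a b => [[|[|[|[|[|[|?]]]]]] ?] [[|[|[|[|[|[|?]]]]]] ?]. Qed.

Lemma cdist6_triangle (a b c : 'I_6) : cdist6 a c <= cdist6 a b + cdist6 b c.
Proof.
by case: a b c => [[|[|[|[|[|[|?]]]]]] ?] [[|[|[|[|[|[|?]]]]]] ?] [[|[|[|[|[|[|?]]]]]] ?].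
Qed.

Lemma cdist6_geodesic (a b : 'I_6) : 0 < cdist6 a b ->
  exists2 c : 'I_6, cdist6 a c = 1 & cdist6 c b = (cdist6 a b).-1.
Proof.
case: a b => [[|[|[|[|[|[|?]]]]]] ?] [[|[|[|[|[|[|?]]]]]] ?] //= _;
  first [ by exists (@Ordinal 6 0 isT) | by exists (@Ordinal 6 1 isT) | by exists (@Ordinal 6 2 isT)
        | by exists (@Ordinal 6 3 isT) | by exists (@Ordinal 6 4 isT) | by exists (@Ordinal 6 5 isT) ].
Qed.

Definition reaches (k : 'I_3) (t : nat) := (0 < k) && (t <= k).

Lemma reaches_le2 k t : reaches k t -> t <= 2.
Proof. by case/andP => _ /leq_trans; apply; rewrite -ltnS. Qed.

Section Grid.

Variable m : nat.

Definition grid_dist (u v : 'I_m * 'I_6) := distn u.1 v.1 + cdist6 u.2 v.2.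

Lemma distn_eq0 (i j : 'I_m) : (distn i j == 0) = (i == j).
Proof. by rewrite -val_eqE /= /distn; apply/idP/idP => /eqP H; apply/eqP; lia. Qed.

Lemma grid_dist_eq0 u v : (grid_dist u v == 0) = (u == v).
Proof. by case: u v => [i a] [j b]; rewrite /grid_dist addn_eq0 distn_eq0 cdist6_eq0. Qed.

Lemma grid_adjE u v : PmC6 m u v = (grid_dist u v == 1).
Proof.
case: u v => [i a] [j b]; rewrite /PmC6 /cartesian /= cycle_adj6E -cdist6_eq0 -distn_eq0.
have -> : path_adj i j = (distn i j == 1).
  by rewrite /path_adj /distn; apply/idP/idP => [/orP [] /eqP|/eqP H]; [lia | lia | apply/orP; lia].
by rewrite /grid_dist /=; case: (distn i j) => [|[|?]]; case: (cdist6 a b) => [|[|?]].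
Qed.

Lemma grid_triangle u w v : grid_dist u v <= grid_dist u w + grid_dist w v.
Proof. by have := cdist6_triangle u.2 w.2 v.2; rewrite /grid_dist /distn; lia. Qed.

Lemma grid_geodesic u v : 0 < grid_dist u v ->
  exists2 w, PmC6 m u w & grid_dist w v = (grid_dist u v).-1.
Proof.
case: u v => [i a] [j b]; rewrite /grid_dist /=.
have caa : cdist6 a a = 0 by apply/eqP; rewrite cdist6_eq0.
case: (posnP (distn i j)) => [ij0|ij_gt0] duv.
  rewrite ij0 in duv; have [c ac cb] := cdist6_geodesic duv.
  by exists (i, c); rewrite ?grid_adjE /grid_dist /= ?ij0 ?ac ?cb // /distn subnn.
pose i' := if i < j then i.+1 else i.-1.
have lt_i'm : i' < m.
  rewrite /i'; case: (ltnP i j) => ij; first exact: leq_ltn_trans ij (ltn_ord j).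
  exact: leq_ltn_trans (leq_pred i) (ltn_ord i).
exists (Ordinal lt_i'm, a); rewrite ?grid_adjE /grid_dist /= ?caa; move: ij_gt0;
  rewrite /i' /distn -!subn1; case: (ltnP i j); lia.
Qed.

Lemma within_grid k u v : within (PmC6 m) k u v = (grid_dist u v <= k).
Proof.
by apply: withinE; [exact: grid_dist_eq0 | exact: grid_adjE | exact: grid_triangle | exact: grid_geodesic].
Qed.

Lemma hears_grid (f : broadcast2 ('I_m * 'I_6)%type) u v :
  hears (PmC6 m) f u v = reaches (f v) (grid_dist v u).
Proof. by rewrite /hears within_grid. Qed.

End Grid.

(** * Columns and windows *)

Record rowset := Rowset { row0 : bool; row1 : bool; row2 : bool; row3 : bool; row4 : bool; row5 : bool }.

Definition in_rows (x : rowset) (r : nat) : bool :=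
  match r with 0 => row0 x | 1 => row1 x | 2 => row2 x | 3 => row3 x | 4 => row4 x | _ => row5 x end.
Definition rowset_of (P : nat -> bool) := Rowset (P 0) (P 1) (P 2) (P 3) (P 4) (P 5).

Definition rows := iota 0 6.
Definition rows0 := rowset_of (fun=> false).
Definition rowsU x y := rowset_of (fun r => in_rows x r || in_rows y r).
Definition rowsC x := rowset_of (fun r => ~~ in_rows x r).
Definition rowsD x y := rowset_of (fun r => in_rows x r && ~~ in_rows y r).
Definition rows_sub x y := all (fun r => in_rows x r ==> in_rows y r) rows.
Definition rows_full x := all (in_rows x) rows.
Definition rows_empty x := all (fun r => ~~ in_rows x r) rows.

Lemma in_rowset_of P r : r < 6 -> in_rows (rowset_of P) r = P r.
Proof. by case: r => [|[|[|[|[|[|r]]]]]]. Qed.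

Lemma in_rows0 r : r < 6 -> in_rows rows0 r = false.
Proof. exact: in_rowset_of. Qed.

Lemma in_rowsU x y r : r < 6 -> in_rows (rowsU x y) r = in_rows x r || in_rows y r.
Proof. exact: in_rowset_of. Qed.

Lemma in_rowsC x r : r < 6 -> in_rows (rowsC x) r = ~~ in_rows x r.
Proof. exact: in_rowset_of. Qed.

Lemma in_rowsD x y r : r < 6 -> in_rows (rowsD x y) r = in_rows x r && ~~ in_rows y r.
Proof. exact: in_rowset_of. Qed.

Lemma rowsetP x y : (forall r, r < 6 -> in_rows x r = in_rows y r) -> x = y.
Proof.
case: x y => [? ? ? ? ? ?] [? ? ? ? ? ?] E.
by move: (E 0 isT) (E 1 isT) (E 2 isT) (E 3 isT) (E 4 isT) (E 5 isT) => /= -> -> -> -> -> ->.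
Qed.

Lemma rows_allP (P : pred nat) : reflect (forall r, r < 6 -> P r) (all P rows).
Proof.
apply: (iffP allP) => H r; first by move=> lt_r6; apply: H; rewrite mem_iota.
by rewrite mem_iota => /andP [_]; exact: H.
Qed.

Lemma rows_subC x y : rows_sub (rowsC x) y = rows_full (rowsU x y).
Proof.
by apply/rows_allP/rows_allP => H r lt_r6; move: (H r lt_r6); rewrite !in_rowset_of //; case: in_rows.
Qed.

Lemma rows_emptyC x : rows_empty (rowsC x) = rows_full x.
Proof. by apply/rows_allP/rows_allP => H r lt_r6; move: (H r lt_r6); rewrite in_rowset_of ?negbK. Qed.

Record column := Column { lev0 : 'I_3; lev1 : 'I_3; lev2 : 'I_3; lev3 : 'I_3; lev4 : 'I_3; lev5 : 'I_3 }.

Definition level (c : column) (s : nat) : 'I_3 :=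
  match s with 0 => lev0 c | 1 => lev1 c | 2 => lev2 c | 3 => lev3 c | 4 => lev4 c | _ => lev5 c end.
Definition column_of (g : nat -> 'I_3) := Column (g 0) (g 1) (g 2) (g 3) (g 4) (g 5).
Definition zero_column := column_of (fun=> ord0).
Local Notation Z := zero_column.
Definition column_cost (c : column) := sumn [seq nat_of_ord (level c s) | s <- rows].

Lemma level_column_of g s : s < 6 -> level (column_of g) s = g s.
Proof. by case: s => [|[|[|[|[|[|s]]]]]]. Qed.

Lemma column_ext g g' : (forall s, s < 6 -> g s = g' s) -> column_of g = column_of g'.
Proof. by move=> E; rewrite /column_of !E. Qed.

Lemma column_of_level c : column_of (level c) = c.
Proof. by case: c. Qed.

Definition heard_rows (c : column) (d : nat) : rowset :=
  rowset_of (fun r => has (fun s => reaches (level c s) (d + cdist6 s r)) rows).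

Lemma heard_rows_zero d : heard_rows Z d = rows0.
Proof. by []. Qed.

Definition window_at (x : seq column) (j : nat) : rowset :=
  rowset_of (fun r => has (fun k => in_rows (heard_rows (nth Z x (j + k)) (distn k 2)) r) (iota 0 5)).
Definition window a b c d e := window_at [:: a; b; c; d; e] 0.
Definition windows_full (x : seq column) :=
  all (fun j => rows_full (window_at x j)) (iota 0 (size x - 4)).

Lemma windows_full_cons a x : 4 <= size x ->
  windows_full (a :: x) = rows_full (window_at (a :: x) 0) && windows_full x.
Proof.
move=> x_ge4; rewrite /windows_full /= (subSn x_ge4) /=.
by rewrite (iotaDl 1 0) all_map.
Qed.

(** * The column automaton *)

(* When column j is read next, [unheard2] and [unheard1] are the rows of
   columns j-2 and j-1 that are not yet dominated, [heard0] and [heard1] the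
   rows of columns j and j+1 that are already dominated. *)
Record state := State { unheard2 : rowset; unheard1 : rowset; heard0 : rowset; heard1 : rowset }.

Definition transition (s : state) (h0 h1 h2 : rowset) : option state :=
  if rows_sub (unheard2 s) h2 then
    Some (State (rowsD (unheard1 s) h1) (rowsC (rowsU (heard0 s) h0)) (rowsU (heard1 s) h1) h2)
  else None.
Definition step (s : state) (c : column) :=
  transition s (heard_rows c 0) (heard_rows c 1) (heard_rows c 2).

Definition init := State rows0 rows0 rows0 rows0.
Definition accepting (s : state) := rows_empty (unheard2 s) && rows_empty (unheard1 s).

Fixpoint run (s : state) (cs : seq column) : option state :=
  if cs is c :: cs' then obind (run^~ cs') (step s c) else Some s.
Definition accepts (s : state) (cs : seq column) :=
  if run s cs is Some s' then accepting s' else false.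

Lemma run_cons s c l : run s (c :: l) = obind (run^~ l) (step s c).
Proof. by []. Qed.

Lemma run_cat s l1 l2 : run s (l1 ++ l2) = obind (run^~ l2) (run s l1).
Proof. by elim: l1 s => [|c l1 IH] s //=; case: (step s c). Qed.

(* The state after reading ..., a, b, c, d: columns not yet read count as [Z]. *)
Definition window_state (a b c d : column) :=
  State (rowsC (window a b c d Z)) (rowsC (window b c d Z Z)) (window c d Z Z Z) (window d Z Z Z Z).

Lemma in_window a b c d e r : r < 6 -> in_rows (window a b c d e) r =
  [|| in_rows (heard_rows a 2) r, in_rows (heard_rows b 1) r, in_rows (heard_rows c 0) r,
      in_rows (heard_rows d 1) r | in_rows (heard_rows e 2) r].
Proof. by move=> lt_r6; rewrite in_rowset_of //= orbF. Qed.

Lemma step_window_state a b c d e :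
  step (window_state a b c d) e =
  if rows_full (window a b c d e) then Some (window_state b c d e) else None.
Proof.
rewrite /step /transition rows_subC.
have in_Z k r : r < 6 -> in_rows (heard_rows Z k) r = false.
  by move=> lt_r6; rewrite heard_rows_zero in_rows0.
have -> : rowsU (window a b c d Z) (heard_rows e 2) = window a b c d e.
  by apply: rowsetP => r lt_r6; rewrite !(in_rowsU, in_window, in_Z) // orbF -!orbA.
case: ifP => // _; congr (Some (State _ _ _ _)); apply: rowsetP => r lt_r6;
  by rewrite !(in_rowsU, in_rowsC, in_rowsD, in_window, in_Z) // ?orbF -?negb_or -?orbA.
Qed.

Lemma accepts_window_state a b c d l :
  accepts (window_state a b c d) l = windows_full [:: a, b, c, d & l ++ [:: Z; Z]].
Proof.
elim: l a b c d => [|e l IH] a b c d.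
  by rewrite /accepts /accepting /windows_full /= !rows_emptyC andbT.
rewrite /accepts /= step_window_state windows_full_cons ?size_cat ?addn2 //.
by case: ifP => //= _; exact: IH.
Qed.

Lemma accepts_init a b l :
  accepts init [:: a, b & l] = windows_full [:: Z, Z, a, b & l ++ [:: Z; Z]].
Proof.
rewrite -accepts_window_state /accepts (run_cat init [:: a; b] l).
have -> : run init [:: a; b] = Some (window_state Z Z a b).
  rewrite /= /step /transition /=; congr (Some (State _ _ _ _)); apply: rowsetP => r lt_r6;
    by rewrite !(in_rowsU, in_rowsC, in_rowsD, in_rows0, in_window, heard_rows_zero) //
               ?orbF -?negb_or -?orbA.
by [].
Qed.

(** * Potentials and the lower bound *)

Inductive trie := Leaf of option nat | Node of trie & trie.

Fixpoint trie_get (t : trie) (k : seq bool) : option nat :=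
  match t, k with
  | Node l r, b :: k' => trie_get (if b then r else l) k'
  | Leaf v, [::] => v
  | _, _ => None
  end.

Fixpoint trie_all (P : seq bool -> nat -> bool) (t : trie) : bool :=
  match t with
  | Leaf (Some v) => P [::] v
  | Leaf None => true
  | Node l r => trie_all (fun k => P (false :: k)) l && trie_all (fun k => P (true :: k)) r
  end.

Lemma trie_allP P t k v : trie_all P t -> trie_get t k = Some v -> P k v.
Proof.
elim: t P k => [o|l IHl r IHr] P [|b k] //=; first by case: o => // w Pw [<-].
by case/andP => Pl Pr; case: b; [apply: (IHr _ _ Pr) | apply: (IHl _ _ Pl)].
Qed.

Definition encode_rows (x : rowset) := [seq in_rows x r | r <- rows].
Definition encode (s : state) :=
  encode_rows (unheard2 s) ++ encode_rows (unheard1 s) ++ encode_rows (heard0 s) ++ encode_rows (heard1 s).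
Definition decode_rows (k : seq bool) := rowset_of (nth false k).
Definition decode (k : seq bool) : state :=
  State (decode_rows k) (decode_rows (drop 6 k)) (decode_rows (drop 12 k)) (decode_rows (drop 18 k)).

Lemma decode_encode s : decode (encode s) = s.
Proof. by case: s => [[? ? ? ? ? ?] [? ? ? ? ? ?] [? ? ? ? ? ?] [? ? ? ? ? ?]]. Qed.

(* Unlike [enum 'I_3], this list is evaluated by [vm_compute]. *)
Definition levels : seq 'I_3 := [:: @Ordinal 3 0 isT; @Ordinal 3 1 isT; @Ordinal 3 2 isT].

Fixpoint words (n : nat) : seq (seq 'I_3) :=
  if n is n'.+1 then [seq a :: w | a <- levels, w <- words n'] else [:: [::]].
Definition all_columns := [seq column_of (nth ord0 w) | w <- words 6].

Lemma mem_words w : w \in words (size w).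
Proof.
elim: w => [|a w IH] //; apply: (allpairs_f_dep (fun a w => a :: w) _ IH).
by case: a => [[|[|[|?]]] ?]; rewrite // !inE -val_eqE.
Qed.

Lemma all_columnsP (P : pred column) : all P all_columns -> forall c, P c.
Proof.
by rewrite all_map => /allP P_all [a b c d e f]; apply: (P_all _ (mem_words [:: a; b; c; d; e; f])).
Qed.

Definition init_potential := 3.
Definition accept_potential := 2.

(* [init] accepts the empty word, so its potential [init_potential] =
   [accept_potential] + 1 is not stored in the table; it is checked on the
   first transition only, which is why the bound needs a nonempty word. *)
Definition potential_ok_at (T : trie) (c : column) : bool :=
  let h0 := heard_rows c 0 in let h1 := heard_rows c 1 in let h2 := heard_rows c 2 in
  let k := column_cost c in
  let pot s := trie_get T (encode s) in
  (if obind pot (transition init h0 h1 h2) is Some v' then init_potential < k + v' else false) &&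
  trie_all (fun key v => if transition (decode key) h0 h1 h2 is Some s'
                         then (if pot s' is Some v' then v < k + v' else false) else true) T.

Definition valid_potential (T : trie) : bool :=
  all (potential_ok_at T) all_columns
  && trie_all (fun key v => accepting (decode key) ==> (v <= accept_potential)) T.

Section Potential.

Variable T : trie.
Hypothesis T_valid : valid_potential T.

Local Notation pot s := (trie_get T (encode s)).

Lemma potential_init c s' : step init c = Some s' ->
  exists2 v', pot s' = Some v' & init_potential < column_cost c + v'.
Proof.
case/andP: T_valid => /all_columnsP /(_ c) + _.
rewrite /potential_ok_at -/(step init c) => /andP [+ _].
by move=> + step_c; rewrite step_c /=; case: (pot s') => // v' lt_v'; exists v'.
Qed.

Lemma potential_step s c s' v : pot s = Some v -> step s c = Some s' ->
  exists2 v', pot s' = Some v' & v < column_cost c + v'.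
Proof.
case/andP: T_valid => /all_columnsP /(_ c) + _.
rewrite /potential_ok_at => /andP [_ /trie_allP T_c].
move=> /T_c; rewrite decode_encode -/(step s c) => + step_c; rewrite step_c.
by case: (pot s') => // v' lt_v; exists v'.
Qed.

Lemma potential_accepting s v : pot s = Some v -> accepting s -> v <= accept_potential.
Proof. by case/andP: T_valid => _ /trie_allP acc /acc; rewrite decode_encode => /implyP. Qed.

Lemma potential_run l s sf v : pot s = Some v -> run s l = Some sf -> accepting sf ->
  v + size l <= sumn [seq column_cost c | c <- l] + accept_potential.
Proof.
elim: l s v => [|c l IH] s v pot_s; first by case=> <- /(potential_accepting pot_s); rewrite addn0.
rewrite run_cons; case step_c: (step s c) => [s'|] //= run_l acc.
have [v' pot_s' lt_v] := potential_step pot_s step_c.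
by have := IH _ _ pot_s' run_l acc; lia.
Qed.

Lemma accepts_init_cost c l : accepts init (c :: l) ->
  size (c :: l) < sumn [seq column_cost c | c <- c :: l].
Proof.
rewrite /accepts run_cons; case step_c: (step init c) => [s'|] //=.
case run_l: (run s' l) => [sf|] // acc.
have [v' pot_s' lt_v'] := potential_init step_c.
have := potential_run pot_s' run_l acc.
by rewrite /init_potential /accept_potential in lt_v' *; lia.
Qed.

End Potential.

Fixpoint trie_set (t : trie) (k : seq bool) (v : nat) : trie :=
  match k, t with
  | [::], _ => Leaf (Some v)
  | b :: k', Node l r => if b then Node l (trie_set r k' v) else Node (trie_set l k' v) r
  | b :: k', Leaf _ =>
      if b then Node (Leaf None) (trie_set (Leaf None) k' v)
      else Node (trie_set (Leaf None) k' v) (Leaf None)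
  end.

Fixpoint trie_map (F : seq bool -> nat -> nat) (t : trie) : trie :=
  match t with
  | Leaf v => Leaf (omap (F [::]) v)
  | Node l r => Node (trie_map (fun k => F (false :: k)) l) (trie_map (fun k => F (true :: k)) r)
  end.

Definition profile := (rowset * rowset * rowset * nat)%type.

Definition successors (ps : seq profile) (s : state) : seq (state * nat) :=
  pmap (fun p : profile => let: (h0, h1, h2, k) := p in omap (pair^~ k) (transition s h0 h1 h2)) ps.

Fixpoint explore (ps : seq profile) (fuel : nat) (todo : seq state) (seen : trie) : trie :=
  match fuel, todo with
  | fuel'.+1, s :: todo' =>
      let visit acc (p : state * nat) :=
        let: (queue, table) := acc in
        if trie_get table (encode p.1) is Some _ then acc
        else (p.1 :: queue, trie_set table (encode p.1) 0) in
      let: (todo'', seen') := foldl visit (todo', seen) (successors ps s) in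
      explore ps fuel' todo'' seen'
  | _, _ => seen
  end.

Definition relax (ps : seq profile) (T : trie) : trie :=
  trie_map (fun key v => foldl (fun best (p : state * nat) =>
      if trie_get T (encode p.1) is Some v' then minn best (v' + p.2 - 1) else best)
    v (successors ps (decode key))) T.

(* An unverified search: the states reachable from [init], then three rounds
   of Bellman-Ford relaxation (which reach the fixpoint) starting from 64 as
   infinity.  Any fuel letting the search finish (1317 states are reachable)
   would do, as only the resulting table is checked. *)
Definition potential_table : trie := Eval vm_compute in
  let ps := [seq (heard_rows c 0, heard_rows c 1, heard_rows c 2, column_cost c) | c <- all_columns] in
  let reachable := explore ps 4096 [:: init] (Leaf None) in
  iter 3 (relax ps)
    (trie_map (fun key _ => if accepting (decode key) then accept_potential else 64) reachable).

Lemma potential_table_valid : valid_potential potential_table.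
Proof. vm_compute; reflexivity. Qed.

(** * Broadcasts as column sequences *)

Section Columns.

Variables (m : nat) (f : broadcast2 ('I_m * 'I_6)%type).

Definition value_at (i s : nat) : 'I_3 :=
  if (insub i, insub s) is (Some i', Some s') then f (i', s') else ord0.
Definition column_at (i : nat) := column_of (value_at i).
Definition columns := mkseq column_at m.
Definition padded := [:: Z, Z & columns ++ [:: Z; Z]].

Lemma value_atE i s (lt_im : i < m) (lt_s6 : s < 6) :
  value_at i s = f (Ordinal lt_im, Ordinal lt_s6).
Proof.
rewrite /value_at; case: insubP => [i' _ val_i'|]; last by rewrite lt_im.
by case: insubP => [s' _ val_s'|]; [congr (f (_, _)); apply: val_inj | rewrite lt_s6].
Qed.

Lemma level_column_at (i : 'I_m) (s : 'I_6) : level (column_at i) s = f (i, s).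
Proof. by rewrite level_column_of // /value_at !valK. Qed.

Lemma column_at_out i : m <= i -> column_at i = Z.
Proof. by move=> ge_im; rewrite /column_at /value_at insubF // ltnNge ge_im. Qed.

Lemma nth_padded p : nth Z padded p = if p < 2 then Z else column_at (p - 2).
Proof.
case: p => [|[|p]] //=; rewrite subn2 /= nth_cat size_mkseq.
case: ltnP => [lt_pm|ge_pm]; first by rewrite nth_mkseq.
by rewrite column_at_out //; case: (p - m) => [|[|?]] //=; rewrite nth_nil.
Qed.

Lemma hears_window (j : 'I_m) (r : 'I_6) :
  [exists v, hears (PmC6 m) f (j, r) v] = in_rows (window_at padded j) r.
Proof.
rewrite /window_at in_rowset_of //; apply/existsP/hasP => [[[i s]]|[k]].
  move=> reach; rewrite hears_grid /grid_dist /= in reach.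
  have near : distn i j <= 2 := leq_trans (leq_addr _ _) (reaches_le2 reach).
  exists (i + 2 - j); first by rewrite mem_iota; move: near; rewrite /distn; lia.
  rewrite /heard_rows in_rowset_of //; apply/hasP; exists (nat_of_ord s).
    by rewrite mem_iota ltn_ord.
  rewrite nth_padded ifF; last by move: near; rewrite /distn; lia.
  have -> : j + (i + 2 - j) - 2 = i by move: near; rewrite /distn; lia.
  have -> : distn (i + 2 - j) 2 = distn i j by move: near; rewrite /distn; lia.
  by rewrite level_column_at.
rewrite mem_iota /heard_rows in_rowset_of // => /andP [_ lt_k5] /hasP [s].
rewrite mem_iota => /andP [_ lt_s6].
rewrite nth_padded; case: ltnP => [_|ge2]; first by rewrite level_column_of.
case: (ltnP (j + k - 2) m) => [lt_im|ge_im]; last by rewrite column_at_out // level_column_of.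
rewrite (level_column_at (Ordinal lt_im) (Ordinal lt_s6)) => reach.
exists (Ordinal lt_im, Ordinal lt_s6); rewrite hears_grid /grid_dist /=.
by have -> : distn (j + k - 2) j = distn k 2 by move: ge2; rewrite /distn; lia.
Qed.

Lemma dominating_windows : dominating (PmC6 m) f = windows_full padded.
Proof.
rewrite /windows_full; have -> : size padded - 4 = m by rewrite /= size_cat size_mkseq /=; lia.
apply/forallP/allP => [dom j|full [j r]].
  rewrite mem_iota => /andP [_ lt_jm]; apply/rows_allP => r lt_r6.
  by rewrite -(hears_window (Ordinal lt_jm) (Ordinal lt_r6)); exact: dom.
have j_in : (j : nat) \in iota 0 m by rewrite mem_iota ltn_ord.
by rewrite hears_window; have /rows_allP := full j j_in; apply; exact: ltn_ord.
Qed.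

Lemma dominating_accepts : 2 <= m -> dominating (PmC6 m) f = accepts init columns.
Proof.
move=> m_ge2; rewrite dominating_windows /padded.
have := size_mkseq column_at m; rewrite -/columns.
by case: columns => [|a [|b l]] /= size_cols; [lia | lia | rewrite accepts_init].
Qed.

Lemma cost_columns : cost f = sumn [seq column_cost c | c <- columns].
Proof.
rewrite /cost (eq_bigr (fun v => (f (v.1, v.2) : nat))); last by case.
rewrite -(pair_big xpredT xpredT (fun i s => (f (i, s) : nat))) /=.
have iotaE n : iota 0 n = index_iota 0 n by rewrite /index_iota subn0.
rewrite /columns /mkseq -map_comp sumnE big_map iotaE big_mkord.
apply: eq_bigr => i _; rewrite /= /column_cost sumnE big_map /rows iotaE big_mkord.
by apply: eq_bigr => s _; rewrite level_column_at.
Qed.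

End Columns.

Definition broadcast_of (m : nat) (cs : seq column) : broadcast2 ('I_m * 'I_6)%type :=
  [ffun v : 'I_m * 'I_6 => level (nth Z cs v.1) v.2].

Lemma columns_broadcast_of m cs : size cs = m -> columns (broadcast_of m cs) = cs.
Proof.
move=> size_cs; apply: (@eq_from_nth _ Z); first by rewrite size_mkseq.
move=> i; rewrite size_mkseq => lt_im; rewrite nth_mkseq // -[RHS]column_of_level.
by apply: column_ext => s lt_s6; rewrite (value_atE _ lt_im lt_s6) ffunE.
Qed.

Lemma dominating_cost m (f : broadcast2 ('I_m * 'I_6)%type) :
  2 <= m -> dominating (PmC6 m) f -> m < cost f.
Proof.
move=> m_ge2; rewrite cost_columns dominating_accepts //.
have := size_mkseq (column_at f) m; rewrite -/(columns f).
case: (columns f) => [|c l] /= size_cols; first by lia.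
by move/(accepts_init_cost potential_table_valid) => /=; lia.
Qed.

(** * The upper bound *)

Definition point_column (s : nat) (k : 'I_3) := column_of (fun t => if t == s then k else ord0).
Definition strength1 : 'I_3 := @Ordinal 3 1 isT.
Definition strength2 : 'I_3 := @Ordinal 3 2 isT.

Definition first_column := point_column 3 strength1.
Definition pattern_column (j : nat) :=
  match j %% 4 with 1 => point_column 0 strength2 | 3 => point_column 3 strength2 | _ => Z end.
(* For even [n] this is [pattern_column n.+1]; for odd [n] a single 1
   dominates the rest of the last column. *)
Definition closing_column (n : nat) :=
  match n %% 4 with
  | 0 => point_column 0 strength2 | 1 => point_column 3 strength1
  | 2 => point_column 3 strength2 | _ => point_column 0 strength1
  end.
Definition witness_columns (n : nat) :=
  first_column :: [seq pattern_column j | j <- iota 1 n] ++ [:: closing_column n].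

Definition pattern_state (n : nat) :=
  odflt init (run init (first_column :: [seq pattern_column j | j <- iota 1 (n %% 4)])).

Lemma run_pattern n :
  run init (first_column :: [seq pattern_column j | j <- iota 1 n]) = Some (pattern_state n).
Proof.
elim: n => [|n IH]; first by vm_compute.
rewrite -[n.+1]addn1 iotaD map_cat -cat_cons run_cat IH /= addnC /pattern_state /pattern_column -modnDml.
have : n %% 4 < 4 by rewrite ltn_mod.
by case: (n %% 4) => [|[|[|[|?]]]] // _; vm_compute.
Qed.

Lemma accepts_witness n : accepts init (witness_columns n).
Proof.
rewrite /accepts /witness_columns -cat_cons run_cat run_pattern /pattern_state /closing_column.
have : n %% 4 < 4 by rewrite ltn_mod.
by case: (n %% 4) => [|[|[|[|?]]]] // _; vm_compute.
Qed.

Lemma witness_cost n : sumn [seq column_cost c | c <- witness_columns n] = n + 3.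
Proof.
have odd_mod4 k : odd (k %% 4) = odd k := @odd_mod k 4 erefl.
have pattern_cost j : column_cost (pattern_column j) = (odd j).*2.
  rewrite -odd_mod4 /pattern_column; have : j %% 4 < 4 by rewrite ltn_mod.
  by case: (j %% 4) => [|[|[|[|?]]]].
have closing_cost : column_cost (closing_column n) = 2 - odd n.
  rewrite -odd_mod4 /closing_column; have : n %% 4 < 4 by rewrite ltn_mod.
  by case: (n %% 4) => [|[|[|[|?]]]].
rewrite /witness_columns /= map_cat sumn_cat /= closing_cost -map_comp.
have -> : sumn [seq column_cost (pattern_column j) | j <- iota 1 n] = n + odd n.
  elim: n {closing_cost} => [|n IH] //.
  rewrite -[n.+1]addn1 iotaD map_cat sumn_cat IH /= addn0 pattern_cost add1n addn1 /=.
  by case: (odd n) => /=; lia.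
by rewrite (_ : column_cost first_column = 1) //; case: (odd n) => /=; lia.
Qed.

Lemma size_witness m : 2 <= m -> size (witness_columns (m - 2)) = m.
Proof. by rewrite /= size_cat size_map size_iota /=; lia. Qed.

Definition witness m := broadcast_of m (witness_columns (m - 2)).

Lemma witness_dominating m : 2 <= m -> dominating (PmC6 m) (witness m).
Proof.
by move=> m_ge2; rewrite dominating_accepts // columns_broadcast_of ?size_witness // accepts_witness.
Qed.

Lemma cost_witness m : 2 <= m -> cost (witness m) = m + 1.
Proof.
by move=> m_ge2; rewrite cost_columns columns_broadcast_of ?size_witness // witness_cost; lia.
Qed.

Lemma bigminn_le (I : finType) (P : pred I) (F : I -> nat) idx j :
  P j -> \big[minn/idx]_(i | P i) F i <= F j.
Proof.
move=> Pj; have : j \in index_enum I by rewrite mem_index_enum.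
elim: (index_enum I) => [|x r IH] //; rewrite inE big_cons => /orP [/eqP <-|jr].
  by rewrite Pj geq_minl.
by case: ifP => _; [exact: leq_trans (geq_minr _ _) (IH jr) | exact: IH jr].
Qed.

Lemma gamma_b2_PmC6 m : 2 <= m -> gamma_b2 (PmC6 m) = m + 1.
Proof.
move=> m_ge2; apply/eqP; rewrite eqn_leq; apply/andP; split.
  by rewrite -cost_witness //; apply: bigminn_le; exact: witness_dominating.
apply: (big_ind (fun x => m + 1 <= x)) => [|x y|f].
- by rewrite card_prod !card_ord; lia.
- by rewrite leq_min => -> ->.
by rewrite addn1; exact: dominating_cost.
Qed.

Theorem corollary4p8 (m : nat) : 3 <= m ->
  (m %% 4 = 0 -> gamma_b2 (PmC6 m) = m \/ gamma_b2 (PmC6 m) = m + 1) /\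
  (m %% 4 <> 0 -> gamma_b2 (PmC6 m) = m + 1).
Proof.
move=> m_ge3; have gamma_m := gamma_b2_PmC6 (ltnW m_ge3).
by split=> _; [right|].
Qed.
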